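(* Let $n\ge 2$. The completely isolated subsemigroups of $\overline{\mathcal{PI}^{\ast}}_n$ are exactly $\overline{\mathcal{PI}^{\ast}}_n$, $\mathcal{S}_n$ and $\overline{\mathcal{PI}^{\ast}}_n\setminus\mathcal{S}_n$.
   Context: Let $X=\{1,\dots,n\}$, $X'=\{1',\dots,n'\}$. $\overline{\mathcal{PI}^{\ast}}_n$ is the set of partitions of $X\cup X'$ each of whose blocks is a singleton (point) or a generalised line (a set meeting both $X$ and $X'$), with product $\circ$: $\alpha\circ\beta$ has as generalised lines exactly the sets $A\cup D'$ such that $A\cup B'$ is a generalised line of $\alpha$ and $B\cup D'$ is a generalised line of $\beta$ (for the same $B\subseteq X$), all other elements being points. $\mathcal{S}_n$ is its group of units: elements all of whose blocks are $\{x,\pi(x)'\}$ for a permutation $\pi$ of $X$. A subsemigroup $T$ of a semigroup $S$ is completely isolated if for all $a,b\in S$, $ab\in T$ implies $a\in T$ or $b\in T$. *)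

From mathcomp Require Import all_boot all_fingroup.
Set Implicit Arguments. Unset Strict Implicit. Unset Printing Implicit Defensive.

(* Points of X ∪ X': inl x = x ∈ X, inr x = x' ∈ X'. *)
Definition pt (n : nat) : finType := ('I_n + 'I_n)%type.

(* A partition of X ∪ X' is represented as its set of blocks. *)
Definition elt (n : nat) := {set {set pt n}}.

Section Defs.
Variable n : nat.

Definition lefts (B : {set pt n}) : {set 'I_n} := [set x | inl x \in B].
Definition rights (B : {set pt n}) : {set 'I_n} := [set x | inr x \in B].

Definition gline (B : {set pt n}) : bool :=
  (lefts B != set0) && (rights B != set0).

Definition PIbar (a : elt n) : bool :=
  partition a [set: pt n] &&
  [forall B in a, (#|B| == 1) || gline B].

Definition PIset : {set elt n} := [set a | PIbar a].

(* the block A ∪ D' built from A ∪ B' (in alpha) and B ∪ D' (in beta) *)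
Definition glue (B1 B2 : {set pt n}) : {set pt n} :=
  [set p | match p with inl x => x \in lefts B1 | inr y => y \in rights B2 end].

Definition prod_lines (a b : elt n) : {set {set pt n}} :=
  [set glue B1 B2 | B1 in a, B2 in b &
     [&& gline B1, gline B2 & rights B1 == lefts B2]].

Definition prod (a b : elt n) : elt n :=
  prod_lines a b :|: [set [set p] | p in ~: cover (prod_lines a b)].

Definition Sset : {set elt n} :=
  [set a | [exists pi : {perm 'I_n},
     a == [set [set inl x; inr (pi x)] | x : 'I_n]]].

Definition subsemigroup (T : {set elt n}) : Prop :=
  [/\ T \subset PIset, T != set0 &
      forall a b, a \in T -> b \in T -> prod a b \in T].

Definition completely_isolated (T : {set elt n}) : Prop :=
  forall a b, a \in PIset -> b \in PIset -> prod a b \in T -> a \in T \/ b \in T.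

End Defs.

From mathcomp Require Import all_boot all_fingroup.
Set Implicit Arguments. Unset Strict Implicit. Unset Printing Implicit Defensive.

(* Weigh an element by the number of points of X and of X' lying on its generalised lines.  If T
   is a completely isolated subsemigroup, then T and its complement in PIbar_n are both closed under
   products and isolated ([x y] in W forces [x] or [y] in W).  In such a W any non-unit leads down
   to the zero element (no lines) by descent on the weight: a non-unit [a] with a line either has a
   lighter square, or factors as [a = x y] with [x^2] and [y^2] lighter than [a] (route the lines
   of [a] through a suitable middle copy of X), and isolation puts [x] or [y] in W.  Likewise W
   contains the identity as soon as it contains a unit, S_n being a finite group.  Since the zero
   and the identity each lie in T or in its complement, each of S_n and PIbar_n \ S_n lies
   entirely inside or entirely outside T. *)


Section PartitionMonoid.
Variable n : nat.
Local Notation ptn := (pt n).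
Local Notation eltn := (elt n).
Implicit Types (a b : eltn) (B : {set ptn}) (L : {set {set ptn}}) (W : {set eltn}).

Definition block (A D : {set 'I_n}) : {set ptn} :=
  [set p | match p with inl x => x \in A | inr y => y \in D end].

Definition glines a := [set B in a | gline B].

Definition of_glines L : eltn := L :|: [set [set p] | p in ~: cover L].

Definition lefts_of a := [set lefts B | B in glines a].
Definition rights_of a := [set rights B | B in glines a].
Definition ldom a := \bigcup_(B in glines a) lefts B.
Definition rdom a := \bigcup_(B in glines a) rights B.
Definition weight a := #|ldom a| + #|rdom a|.

Definition perm_elt (s : {perm 'I_n}) : eltn := [set [set inl x; inr (s x)] | x : 'I_n].
Definition zero_elt : eltn := of_glines set0.

Lemma in_lefts x B : (x \in lefts B) = (inl x \in B).
Proof. by rewrite inE. Qed.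

Lemma in_rights y B : (y \in rights B) = (inr y \in B).
Proof. by rewrite inE. Qed.

Lemma lefts_block A D : lefts (block A D) = A.
Proof. by apply/setP=> x; rewrite !inE. Qed.

Lemma rights_block A D : rights (block A D) = D.
Proof. by apply/setP=> x; rewrite !inE. Qed.

Lemma block_eta B : block (lefts B) (rights B) = B.
Proof. by apply/setP=> [[x|x]]; rewrite !inE. Qed.

Lemma glueE B1 B2 : glue B1 B2 = block (lefts B1) (rights B2).
Proof. by []. Qed.

Lemma gline_block A D : gline (block A D) = (A != set0) && (D != set0).
Proof. by rewrite /gline lefts_block rights_block. Qed.

Lemma gline_set1 (p : ptn) : gline [set p] = false.
Proof.
apply/negP=> /andP[/set0Pn[x]]; rewrite inE in_set1 => /eqP<-.
by case/set0Pn=> y; rewrite inE in_set1.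
Qed.

Lemma in_glines B a : (B \in glines a) = (B \in a) && gline B.
Proof. by rewrite inE. Qed.

Lemma glines_sub a B : B \in glines a -> B \in a.
Proof. by rewrite in_glines => /andP[]. Qed.

Lemma glines_gline a B : B \in glines a -> gline B.
Proof. by rewrite in_glines => /andP[]. Qed.

Lemma glines_inl a B : B \in glines a -> exists x, inl x \in B.
Proof. by move/glines_gline=> /andP[/set0Pn[x]]; rewrite inE; exists x. Qed.

Lemma glines_inr a B : B \in glines a -> exists y, inr y \in B.
Proof. by move/glines_gline=> /andP[_ /set0Pn[y]]; rewrite inE; exists y. Qed.

Lemma ldomP a x : reflect (exists2 B, B \in glines a & inl x \in B) (x \in ldom a).
Proof.
by rewrite /ldom; apply: (iffP bigcupP) => -[B hB hx]; exists B => //; move: hx; rewrite !inE.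
Qed.

Lemma rdomP a y : reflect (exists2 B, B \in glines a & inr y \in B) (y \in rdom a).
Proof.
by rewrite /rdom; apply: (iffP bigcupP) => -[B hB hy]; exists B => //; move: hy; rewrite !inE.
Qed.

Section Blocks.
Variable a : eltn.
Hypothesis ha : a \in PIset n.

Lemma PI_partition : partition a [set: ptn].
Proof. by move: ha; rewrite inE => /andP[]. Qed.

Lemma PI_block_eq B1 B2 p : B1 \in a -> B2 \in a -> p \in B1 -> p \in B2 -> B1 = B2.
Proof.
move: PI_partition => /and3P[_ /trivIsetP tI _] h1 h2 p1 p2.
have [//|ne] := eqVneq B1 B2.
by have := disjointFr (tI _ _ h1 h2 ne) p1; rewrite p2.
Qed.

Lemma PI_gline_eq B1 B2 p :
  B1 \in glines a -> B2 \in glines a -> p \in B1 -> p \in B2 -> B1 = B2.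
Proof. by move=> /glines_sub h1 /glines_sub h2; apply: PI_block_eq. Qed.

Lemma PI_cover p : exists2 B, B \in a & p \in B.
Proof.
move: PI_partition => /and3P[/eqP cv _ _].
have : p \in cover a by rewrite cv inE.
by case/bigcupP=> B hB pB; exists B.
Qed.

Lemma PI_set0 : set0 \notin a.
Proof. by move: PI_partition => /and3P[]. Qed.

Lemma PI_point B : B \in a -> ~~ gline B -> exists p, B = [set p].
Proof.
move: ha; rewrite inE => /andP[_ /forall_inP h] hB ng.
by have /orP[/cards1P//|g] := h B hB; rewrite g in ng.
Qed.

End Blocks.

Lemma notin_cover L B p : B \in L -> p \notin cover L -> p \notin B.
Proof. by move=> hB; apply: contra => pB; apply/bigcupP; exists B. Qed.

Section OfGlines.
Variable L : {set {set ptn}}.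
Hypothesis L_gline : forall B, B \in L -> gline B.

Lemma of_glines_PI : trivIset L -> of_glines L \in PIset n.
Proof.
move=> tL; rewrite inE; apply/andP; split.
  apply/and3P; split.
  - apply/eqP/setP=> p; rewrite inE; apply/bigcupP.
    have [/bigcupP[B hB pB]|np] := boolP (p \in cover L).
      by exists B; rewrite // inE hB.
    by exists [set p]; rewrite ?inE //; apply/orP; right; apply/imsetP; exists p; rewrite ?inE.
  - apply/trivIsetP => B1 B2; rewrite !inE.
    case/orP=> [h1|/imsetP[p1 hp1 ->]] /orP[h2|/imsetP[p2 hp2 ->]] ne.
    + by move/trivIsetP: tL; apply.
    + by rewrite disjoint_sym disjoints1; rewrite inE in hp2; apply: notin_cover h1 hp2.
    + by rewrite disjoints1; rewrite inE in hp1; apply: notin_cover h2 hp1.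
    + by rewrite disjoints1 inE; apply: contra ne => /eqP->.
  - rewrite !inE negb_or; apply/andP; split.
      by apply/negP=> /L_gline /andP[/set0Pn[x]]; rewrite !inE.
    by apply/imsetP=> -[p _ /setP/(_ p)]; rewrite !inE eqxx.
apply/forall_inP=> B; rewrite !inE => /orP[/L_gline->|/imsetP[p _ ->]].
  by rewrite orbT.
by rewrite cards1.
Qed.

Lemma glines_of_glines : glines (of_glines L) = L.
Proof.
apply/setP=> B; rewrite !inE.
have [hB|hB] /= := boolP (B \in L); first by rewrite L_gline.
by apply/negP=> /andP[/imsetP[p _ ->]]; rewrite gline_set1.
Qed.

End OfGlines.

Lemma of_glinesK a : a \in PIset n -> of_glines (glines a) = a.
Proof.
move=> ha; apply/setP=> B; rewrite !inE; apply/idP/idP.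
  case/orP=> [/andP[]//|/imsetP[p hp ->]].
  have [B' hB' pB'] := PI_cover ha p.
  have [g|g] := boolP (gline B').
    by rewrite inE in hp; case/negP: hp; apply/bigcupP; exists B'; rewrite // inE hB'.
  by have [q eq] := PI_point ha hB' g; move: pB'; rewrite eq inE => /eqP->; rewrite -eq.
move=> hB; rewrite hB /=; have [//|g] := boolP (gline B).
have [p eB] := PI_point ha hB g; subst B.
apply/imsetP; exists p => //; rewrite inE; apply/negP=> /bigcupP[B' hB' pB'].
rewrite inE in hB'; case/andP: hB' => hB' g'.
by move: g; rewrite (PI_block_eq ha hB hB' (set11 p) pB') g'.
Qed.

Lemma PI_sub_eq a b : a \in PIset n -> b \in PIset n -> b \subset a -> a = b.
Proof.
move=> ha hb /subsetP ba; apply/eqP; rewrite eqEsubset; apply/andP; split; last exact/subsetP.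
apply/subsetP=> B hB; have /set0Pn[p pB] : B != set0 by apply: contraNneq (PI_set0 ha) => <-.
have [B' hB' pB'] := PI_cover hb p.
by rewrite (PI_block_eq ha hB (ba _ hB') pB pB').
Qed.

Lemma prodE a b : prod a b = of_glines (prod_lines a b).
Proof. by []. Qed.

Lemma prod_linesP a b B :
  reflect (exists B1 B2, [/\ B1 \in glines a, B2 \in glines b,
             rights B1 = lefts B2 & B = glue B1 B2])
          (B \in prod_lines a b).
Proof.
apply: (iffP imset2P).
  case=> B1 B2 h1; rewrite inE => /andP[h2 /and3P[g1 g2 /eqP e]] ->.
  by exists B1, B2; rewrite !in_glines h1 h2 g1 g2.
case=> B1 [B2 []]; rewrite !in_glines => /andP[h1 g1] /andP[h2 g2] e ->.
by exists B1 B2 => //; rewrite inE h2 g1 g2 e eqxx.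
Qed.

Lemma prod_lines_gline a b B : B \in prod_lines a b -> gline B.
Proof.
case/prod_linesP=> B1 [B2 [/glines_gline/andP[l1 _] /glines_gline/andP[_ r2] _ ->]].
by rewrite glueE gline_block l1 r2.
Qed.

Lemma prod_lines_trivI a b : a \in PIset n -> b \in PIset n -> trivIset (prod_lines a b).
Proof.
move=> ha hb; apply/trivIsetP => _ _ /prod_linesP[B1 [B2 [h1 h2 e ->]]]
  /prod_linesP[B1' [B2' [h1' h2' e' ->]]] ne.
rewrite disjoints_subset; apply/subsetP => -[x|x] p1; rewrite inE; apply/negP => p2;
  rewrite !inE in p1 p2; case/negP: ne.
  have E1 := PI_gline_eq ha h1 h1' p1 p2; subst B1'.
  have [y hy] := glines_inl h2.
  have hy' : inl y \in B2' by rewrite -in_lefts -e' e in_lefts.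
  by rewrite (PI_gline_eq hb h2 h2' hy hy').
have E2 := PI_gline_eq hb h2 h2' p1 p2; subst B2'.
have [y hy] := glines_inr h1.
have hy' : inr y \in B1' by rewrite -in_rights e' -e in_rights.
by rewrite (PI_gline_eq ha h1 h1' hy hy').
Qed.

Lemma prod_PI a b : a \in PIset n -> b \in PIset n -> prod a b \in PIset n.
Proof.
move=> ha hb; apply: of_glines_PI; [exact: prod_lines_gline | exact: prod_lines_trivI].
Qed.

Lemma glines_prod a b : glines (prod a b) = prod_lines a b.
Proof. exact: glines_of_glines (@prod_lines_gline a b). Qed.

Lemma ldom_prod_sub a b : ldom (prod a b) \subset ldom a.
Proof.
apply/subsetP=> x /ldomP[B]; rewrite glines_prod => /prod_linesP[B1 [B2 [h1 _ _ ->]]].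
by rewrite !inE => hx; apply/ldomP; exists B1.
Qed.

Lemma rdom_prod_sub a b : rdom (prod a b) \subset rdom b.
Proof.
apply/subsetP=> y /rdomP[B]; rewrite glines_prod => /prod_linesP[B1 [B2 [_ h2 _ ->]]].
by rewrite !inE => hy; apply/rdomP; exists B2.
Qed.

(* The left points of [B] lie on no line of the product. *)
Lemma ldom_prod_lt a b B : a \in PIset n -> B \in glines a ->
  rights B \notin lefts_of b -> #|ldom (prod a b)| < #|ldom a|.
Proof.
move=> ha hB nL; apply/proper_card/properP; split; first exact: ldom_prod_sub.
have [x hx] := glines_inl hB; exists x; first by apply/ldomP; exists B.
apply/negP=> /ldomP[B']; rewrite glines_prod => /prod_linesP[B1 [B2 [h1 h2 e ->]]].
rewrite !inE => hx1; move: nL; rewrite (PI_gline_eq ha hB h1 hx hx1) e.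
by case/negP; apply/imsetP; exists B2.
Qed.

Lemma rdom_prod_lt a b B : b \in PIset n -> B \in glines b ->
  lefts B \notin rights_of a -> #|rdom (prod a b)| < #|rdom b|.
Proof.
move=> hb hB nR; apply/proper_card/properP; split; first exact: rdom_prod_sub.
have [y hy] := glines_inr hB; exists y; first by apply/rdomP; exists B.
apply/negP=> /rdomP[B']; rewrite glines_prod => /prod_linesP[B1 [B2 [h1 h2 e ->]]].
rewrite !inE => hy2; move: nR; rewrite (PI_gline_eq hb hB h2 hy hy2) -e.
by case/negP; apply/imsetP; exists B1.
Qed.

Lemma weight_sq_lt_left a B : a \in PIset n -> B \in glines a ->
  rights B \notin lefts_of a -> weight (prod a a) < weight a.
Proof.
move=> ha hB nL; rewrite /weight -addSn leq_add ?(ldom_prod_lt ha hB nL) //.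
exact/subset_leq_card/rdom_prod_sub.
Qed.

Lemma weight_sq_lt_right a B : a \in PIset n -> B \in glines a ->
  lefts B \notin rights_of a -> weight (prod a a) < weight a.
Proof.
move=> ha hB nR; rewrite /weight -addnS leq_add ?(rdom_prod_lt ha hB nR) //.
exact/subset_leq_card/ldom_prod_sub.
Qed.

Lemma perm_eltE (s : {perm 'I_n}) : perm_elt s = [set block [set x] [set s x] | x : 'I_n].
Proof. by apply: eq_imset => x; apply/setP=> -[y|y]; rewrite !inE /= ?orbF. Qed.

Lemma SsetP a : reflect (exists s, a = perm_elt s) (a \in Sset n).
Proof. by rewrite inE; apply: (iffP existsP) => -[s hs]; exists s; apply/eqP. Qed.

Lemma perm_elt_gline s B : B \in perm_elt s -> gline B.
Proof.
rewrite perm_eltE => /imsetP[x _ ->]; rewrite gline_block.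
by apply/andP; split; apply/set0Pn; eexists; rewrite inE.
Qed.

Lemma perm_elt_trivI s : trivIset (perm_elt s).
Proof.
apply/trivIsetP=> B1 B2; rewrite perm_eltE => /imsetP[x1 _ ->] /imsetP[x2 _ ->] ne.
rewrite disjoints_subset; apply/subsetP => -[y|y]; rewrite !inE => /eqP->;
  apply: contra ne => /eqP e; first by rewrite e.
by rewrite (perm_inj e).
Qed.

Lemma perm_elt_cover s : cover (perm_elt s) = setT.
Proof.
apply/setP=> -[x|y]; rewrite inE; apply/bigcupP; rewrite perm_eltE.
  by exists (block [set x] [set s x]); [apply/imsetP; exists x | rewrite !inE].
exists (block [set (s^-1)%g y] [set s ((s^-1)%g y)]); last by rewrite !inE permKV.
by apply/imsetP; exists ((s^-1)%g y).
Qed.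

Lemma of_glines_perm_elt s : of_glines (perm_elt s) = perm_elt s.
Proof. by rewrite /of_glines perm_elt_cover setCT imset0 setU0. Qed.

Lemma perm_elt_PI s : perm_elt s \in PIset n.
Proof.
by rewrite -of_glines_perm_elt; apply: of_glines_PI; [exact: perm_elt_gline | exact: perm_elt_trivI].
Qed.

Lemma glines_perm_elt s : glines (perm_elt s) = perm_elt s.
Proof. by rewrite -{1}of_glines_perm_elt glines_of_glines //; exact: perm_elt_gline. Qed.

Lemma prod_perm_elt s t : prod (perm_elt s) (perm_elt t) = perm_elt (s * t)%g.
Proof.
suff E : prod_lines (perm_elt s) (perm_elt t) = perm_elt (s * t)%g.
  by rewrite prodE E of_glines_perm_elt.
apply/setP=> B; apply/prod_linesP/idP.
  case=> B1 [B2 []]; rewrite !glines_perm_elt !perm_eltE => /imsetP[x _ ->] /imsetP[y _ ->].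
  rewrite rights_block lefts_block => /set1_inj e ->.
  by apply/imsetP; exists x; rewrite // glueE lefts_block rights_block permM e.
rewrite perm_eltE => /imsetP[x _ ->].
exists (block [set x] [set s x]), (block [set s x] [set t (s x)]).
rewrite !glines_perm_elt !perm_eltE glueE !lefts_block !rights_block permM.
by split=> //; apply/imsetP; [exists x | exists (s x)].
Qed.

Lemma Sset_prod a b : a \in Sset n -> b \in Sset n -> prod a b \in Sset n.
Proof.
by case/SsetP=> s -> /SsetP[t ->]; rewrite prod_perm_elt; apply/SsetP; exists (s * t)%g.
Qed.

Lemma Sset_of_lefts1 a : a \in PIset n ->
  (forall x, exists2 B, B \in glines a & lefts B = [set x]) -> a \in Sset n.
Proof.
move=> ha /fin_all_exists2[f f_line f_lefts].
have /fin_all_exists[g g_in] : forall x, exists y, inr y \in f x.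
  by move=> x; exact: glines_inr (f_line x).
have f_eq x z y : inr y \in f x -> inr y \in f z -> x = z.
  move=> hx hz; apply: set1_inj.
  by rewrite -f_lefts -f_lefts (PI_gline_eq ha (f_line x) (f_line z) hx hz).
have g_inj : injective g.
  by move=> x z e; apply: (f_eq x z (g x)); [exact: g_in | rewrite e; exact: g_in].
pose s := perm g_inj.
have fE x : f x = block [set x] [set s x].
  rewrite -(block_eta (f x)) f_lefts; congr block; apply/setP=> y.
  rewrite in_rights inE permE; apply/idP/eqP=> [hy|->]; last exact: g_in.
  have gy : g ((s^-1)%g y) = y by rewrite -{2}(permKV s y) /s permE.
  by have := g_in ((s^-1)%g y); rewrite gy => /(f_eq _ _ _ hy) ->.
apply/SsetP; exists s; apply: PI_sub_eq; rewrite ?perm_elt_PI //.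
by apply/subsetP=> B; rewrite perm_eltE => /imsetP[x _ ->]; rewrite -fE glines_sub.
Qed.

Lemma Sset_prod_left a b : a \in PIset n -> prod a b \in Sset n -> a \in Sset n.
Proof.
move=> ha /SsetP[s e]; apply: Sset_of_lefts1 => // x.
have : block [set x] [set s x] \in glines (prod a b).
  by rewrite e glines_perm_elt perm_eltE; apply/imsetP; exists x.
rewrite glines_prod => /prod_linesP[B1 [B2 [h1 _ _ E]]].
by exists B1; rewrite // -(lefts_block [set x] [set s x]) E glueE lefts_block.
Qed.

Lemma weight_Sset a : a \in Sset n -> weight a = n + n.
Proof.
case/SsetP=> s ->; rewrite /weight.
suff [-> ->] : ldom (perm_elt s) = setT /\ rdom (perm_elt s) = setT by rewrite cardsT card_ord.
split; apply/setP=> x; rewrite inE.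
  apply/ldomP; exists (block [set x] [set s x]); last by rewrite !inE.
  by rewrite glines_perm_elt perm_eltE; apply/imsetP; exists x.
apply/rdomP; exists (block [set (s^-1)%g x] [set s ((s^-1)%g x)]); last by rewrite !inE permKV.
by rewrite glines_perm_elt perm_eltE; apply/imsetP; exists ((s^-1)%g x).
Qed.

Lemma weight_max a : weight a <= n + n.
Proof. by rewrite /weight leq_add // -[X in _ <= X](card_ord n) max_card. Qed.

Lemma weight_lt_notin_Sset a b : weight b < weight a -> b \notin Sset n.
Proof.
move=> lt; apply/negP=> /weight_Sset e.
by move: (leq_trans lt (weight_max a)); rewrite e ltnn.
Qed.

Lemma glines_zero : glines zero_elt = set0.
Proof. by rewrite glines_of_glines // => B; rewrite inE. Qed.

Lemma zero_PI : zero_elt \in PIset n.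
Proof. by apply: of_glines_PI => [B|]; rewrite ?inE //; apply/trivIsetP=> B; rewrite inE. Qed.

Lemma zero_notin_Sset : 0 < n -> zero_elt \notin Sset n.
Proof.
move=> n_gt0; apply/negP=> /weight_Sset.
by rewrite /weight /ldom /rdom glines_zero !big_set0 cards0; case: n n_gt0.
Qed.

Section Reblocking.
Variable a : eltn.
Hypothesis ha : a \in PIset n.

Definition disjoint_on (f : {set ptn} -> {set 'I_n}) :=
  forall B B' x, B \in glines a -> B' \in glines a -> x \in f B -> x \in f B' -> B = B'.

Definition nonempty_on (f : {set ptn} -> {set 'I_n}) := forall B, B \in glines a -> f B != set0.

Lemma disjoint_on_lefts : disjoint_on (@lefts n).
Proof.
by move=> B B' x hB hB' p1 p2; apply: (PI_gline_eq ha hB hB' (p := inl x)); rewrite -in_lefts.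
Qed.

Lemma disjoint_on_rights : disjoint_on (@rights n).
Proof.
by move=> B B' x hB hB' p1 p2; apply: (PI_gline_eq ha hB hB' (p := inr x)); rewrite -in_rights.
Qed.

Lemma nonempty_on_lefts : nonempty_on (@lefts n).
Proof. by move=> B /glines_gline/andP[]. Qed.

Lemma nonempty_on_rights : nonempty_on (@rights n).
Proof. by move=> B /glines_gline/andP[]. Qed.

Section Reblock.
Variables l r : {set ptn} -> {set 'I_n}.
Hypotheses (l_disj : disjoint_on l) (r_disj : disjoint_on r).
Hypotheses (l_neq0 : nonempty_on l) (r_neq0 : nonempty_on r).

Definition reblock : eltn := of_glines [set block (l B) (r B) | B in glines a].

Lemma reblock_gline B : B \in [set block (l B) (r B) | B in glines a] -> gline B.
Proof. by case/imsetP=> B' h ->; rewrite gline_block l_neq0 ?r_neq0. Qed.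

Lemma glines_reblock : glines reblock = [set block (l B) (r B) | B in glines a].
Proof. exact: glines_of_glines reblock_gline. Qed.

Lemma reblock_PI : reblock \in PIset n.
Proof.
apply: of_glines_PI reblock_gline _.
apply/trivIsetP=> _ _ /imsetP[B1 h1 ->] /imsetP[B2 h2 ->] ne.
rewrite disjoints_subset; apply/subsetP => -[x|x]; rewrite !inE => p1; apply/negP => p2;
  case/negP: ne.
  by rewrite (l_disj h1 h2 p1 p2).
by rewrite (r_disj h1 h2 p1 p2).
Qed.

Lemma lefts_of_reblock : lefts_of reblock = [set l B | B in glines a].
Proof.
by rewrite /lefts_of glines_reblock -imset_comp; apply: eq_imset => B /=; rewrite lefts_block.
Qed.

Lemma rights_of_reblock : rights_of reblock = [set r B | B in glines a].
Proof.
by rewrite /rights_of glines_reblock -imset_comp; apply: eq_imset => B /=; rewrite rights_block.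
Qed.

Lemma ldom_reblock : ldom reblock = \bigcup_(B in glines a) l B.
Proof.
apply/setP=> x; apply/ldomP/bigcupP => -[B]; rewrite ?glines_reblock.
  by case/imsetP=> D h -> hx; exists D; rewrite // -in_lefts lefts_block in hx.
by move=> h hx; exists (block (l B) (r B)); [apply/imsetP; exists B | rewrite !inE].
Qed.

Lemma rdom_reblock : rdom reblock = \bigcup_(B in glines a) r B.
Proof.
apply/setP=> x; apply/rdomP/bigcupP => -[B]; rewrite ?glines_reblock.
  by case/imsetP=> D h -> hx; exists D; rewrite // -in_rights rights_block in hx.
by move=> h hx; exists (block (l B) (r B)); [apply/imsetP; exists B | rewrite !inE].
Qed.

End Reblock.

Variable mid : {set ptn} -> {set 'I_n}.
Hypotheses (mid_disj : disjoint_on mid) (mid_neq0 : nonempty_on mid).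

Definition lfactor := reblock (@lefts n) mid.
Definition rfactor := reblock mid (@rights n).

Lemma lfactor_PI : lfactor \in PIset n.
Proof. exact: reblock_PI disjoint_on_lefts mid_disj nonempty_on_lefts mid_neq0. Qed.

Lemma rfactor_PI : rfactor \in PIset n.
Proof. exact: reblock_PI mid_disj disjoint_on_rights mid_neq0 nonempty_on_rights. Qed.

Lemma glines_lfactor : glines lfactor = [set block (lefts B) (mid B) | B in glines a].
Proof. exact: glines_reblock nonempty_on_lefts mid_neq0. Qed.

Lemma glines_rfactor : glines rfactor = [set block (mid B) (rights B) | B in glines a].
Proof. exact: glines_reblock mid_neq0 nonempty_on_rights. Qed.

Lemma prod_lfactor_rfactor : prod lfactor rfactor = a.
Proof.
rewrite prodE -[RHS](of_glinesK ha); congr of_glines.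
apply/setP=> B; apply/prod_linesP/idP.
  case=> B1 [B2 []]; rewrite glines_lfactor glines_rfactor.
  move=> /imsetP[D1 h1 ->] /imsetP[D2 h2 ->]; rewrite rights_block lefts_block => e ->.
  have /set0Pn[y hy1] := mid_neq0 h1; have hy2 : y \in mid D2 by rewrite -e.
  by rewrite -(mid_disj h1 h2 hy1 hy2) glueE lefts_block rights_block block_eta.
move=> h; exists (block (lefts B) (mid B)), (block (mid B) (rights B)).
rewrite glines_lfactor glines_rfactor glueE !lefts_block !rights_block block_eta.
by split=> //; apply/imsetP; exists B.
Qed.

Definition mid_dom := \bigcup_(B in glines a) mid B.

Lemma weight_sq_lfactor B : B \in glines a -> mid B \notin lefts_of a ->
  #|mid_dom| <= #|rdom a| -> weight (prod lfactor lfactor) < weight a.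
Proof.
move=> hB nL le_mid; rewrite /weight -addSn leq_add //.
  have -> : ldom a = ldom lfactor by rewrite (ldom_reblock nonempty_on_lefts mid_neq0).
  apply: (ldom_prod_lt (B := block (lefts B) (mid B)) lfactor_PI).
    by rewrite glines_lfactor; apply/imsetP; exists B.
  by rewrite rights_block (lefts_of_reblock nonempty_on_lefts mid_neq0).
apply: leq_trans (subset_leq_card (rdom_prod_sub _ _)) _.
by rewrite (rdom_reblock nonempty_on_lefts mid_neq0).
Qed.

Lemma weight_sq_rfactor B : B \in glines a -> mid B \notin rights_of a ->
  #|mid_dom| <= #|ldom a| -> weight (prod rfactor rfactor) < weight a.
Proof.
move=> hB nR le_mid; rewrite /weight -addnS leq_add //.
  apply: leq_trans (subset_leq_card (ldom_prod_sub _ _)) _.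
  by rewrite (ldom_reblock mid_neq0 nonempty_on_rights).
have -> : rdom a = rdom rfactor by rewrite (rdom_reblock mid_neq0 nonempty_on_rights).
apply: (rdom_prod_lt (B := block (mid B) (rights B)) rfactor_PI).
  by rewrite glines_rfactor; apply/imsetP; exists B.
by rewrite lefts_block (rights_of_reblock mid_neq0 nonempty_on_rights).
Qed.

End Reblocking.

Definition lighter_factors a := exists x y,
  [/\ x \in PIset n, y \in PIset n, prod x y = a,
      weight (prod x x) < weight a & weight (prod y y) < weight a].

Section Balanced.
Variable a : eltn.
Hypotheses (ha : a \in PIset n) (a_bal : rights_of a = lefts_of a).

Lemma rdom_balanced : rdom a = ldom a.
Proof.
apply/setP=> x; apply/rdomP/ldomP=> -[B hB hx].
  have /imsetP[B' hB' e] : rights B \in lefts_of a by rewrite -a_bal imset_f.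
  by exists B'; rewrite // -in_lefts -e in_rights.
have /imsetP[B' hB' e] : lefts B \in rights_of a by rewrite a_bal imset_f.
by exists B'; rewrite // -in_rights -e in_lefts.
Qed.

Lemma lighter_factors_mid (mid : {set ptn} -> {set 'I_n}) B :
  disjoint_on a mid -> nonempty_on a mid -> B \in glines a ->
  mid B \notin lefts_of a -> #|mid_dom a mid| <= #|ldom a| -> lighter_factors a.
Proof.
move=> mid_disj mid_neq0 hB nL le_mid.
exists (lfactor a mid), (rfactor a mid); split.
- exact: lfactor_PI.
- exact: rfactor_PI.
- exact: prod_lfactor_rfactor.
- by apply: (weight_sq_lfactor ha mid_disj mid_neq0 hB nL); rewrite rdom_balanced.
- by apply: (weight_sq_rfactor ha mid_disj mid_neq0 hB _ le_mid); rewrite a_bal.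
Qed.

(* Route each line through one of its right points. *)
Lemma lighter_factors_wide B : B \in glines a -> 1 < #|rights B| -> lighter_factors a.
Proof.
move=> hB rB_gt1; have [r0 _] := glines_inr hB.
pose c B' := odflt r0 [pick y in rights B'].
have c_in B' : B' \in glines a -> inr (c B') \in B'.
  move=> hB'; rewrite /c; case: pickP => [y|none] /=; first by rewrite inE.
  by have [y hy] := glines_inr hB'; have := none y; rewrite inE hy.
apply: (@lighter_factors_mid (fun B' => [set c B']) B) => //.
- move=> B1 B2 y h1 h2; rewrite !inE => /eqP-> /eqP e.
  by apply: (PI_gline_eq ha h1 h2 (c_in _ h1)); rewrite e c_in.
- by move=> B' _; apply/set0Pn; exists (c B'); rewrite inE.
- rewrite -a_bal; apply/imsetP=> -[B' hB' e].
  have cB' : inr (c B) \in B' by rewrite -in_rights -e inE.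
  by move: rB_gt1; rewrite (PI_gline_eq ha hB hB' (c_in B hB) cB') -e cards1.
- rewrite -rdom_balanced; apply/subset_leq_card/subsetP=> y /bigcupP[B' hB'].
  by rewrite inE => /eqP->; apply/rdomP; exists B'; rewrite ?c_in.
Qed.

(* Here [a] is a partial permutation whose domain misses some [z]: route each line through the
   image of its left part under the transposition of [z] with a point [d] of the domain. *)
Lemma lighter_factors_thin B : a \notin Sset n -> B \in glines a ->
  (forall B', B' \in glines a -> #|rights B'| <= 1) -> lighter_factors a.
Proof.
move=> a_nS hB thin.
have lefts1 B' x : B' \in glines a -> inl x \in B' -> lefts B' = [set x].
  move=> hB' hx; have : lefts B' \in rights_of a by rewrite a_bal; exact: imset_f.
  case/imsetP=> B'' hB'' e; apply/esym/eqP.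
  by rewrite eqEcard sub1set in_lefts hx cards1 e thin.
have [z zN] : exists z, z \notin ldom a.
  apply/existsP; apply: contraR a_nS => /existsPn all_in.
  apply: Sset_of_lefts1 => // x.
  by have /negPn/ldomP[B' hB' hx] := all_in x; exists B'; rewrite // (lefts1 B' x).
have [d hd] := glines_inl hB; pose t := tperm d z.
apply: (@lighter_factors_mid (fun B' => t @: lefts B') B) => //.
- move=> B1 B2 y h1 h2 /imsetP[x1 hx1 ->] /imsetP[x2 hx2 /perm_inj e].
  by apply: (disjoint_on_lefts ha h1 h2 hx1); rewrite e.
- by move=> B' hB'; rewrite imset_eq0; exact: (@nonempty_on_lefts a B' hB').
- apply/imsetP=> -[B' hB' e]; case/ldomP: zN; exists B'; rewrite // -in_lefts -e.
  by apply/imsetP; exists d; rewrite ?in_lefts // tpermL.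
- rewrite -(card_imset (ldom a) (@perm_inj _ t)); apply/subset_leq_card/subsetP=> y.
  case/bigcupP=> B' hB' /imsetP[x hx ->]; apply: imset_f.
  by apply/ldomP; exists B'; rewrite -?in_lefts.
Qed.

End Balanced.

Lemma lighter_sq_or_factors a B : a \in PIset n -> a \notin Sset n -> B \in glines a ->
  weight (prod a a) < weight a \/ lighter_factors a.
Proof.
move=> ha a_nS hB.
have [/exists_inP[B' hB' nL]|/exists_inPn rights_in] :=
  boolP [exists B' in glines a, rights B' \notin lefts_of a].
  by left; apply: weight_sq_lt_left ha hB' nL.
have [/exists_inP[B' hB' nR]|/exists_inPn lefts_in] :=
  boolP [exists B' in glines a, lefts B' \notin rights_of a].
  by left; apply: weight_sq_lt_right ha hB' nR.
have a_bal : rights_of a = lefts_of a.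
  apply/eqP; rewrite eqEsubset; apply/andP; split; apply/subsetP=> _ /imsetP[B' hB' ->].
    by move: (rights_in B' hB'); rewrite negbK.
  by move: (lefts_in B' hB'); rewrite negbK.
right; have [/exists_inP[B' hB' wide]|/exists_inPn thin] :=
  boolP [exists B' in glines a, 1 < #|rights B'|].
  exact: (lighter_factors_wide ha a_bal hB' wide).
by apply: (lighter_factors_thin ha a_bal a_nS hB) => B' /thin; rewrite -leqNgt.
Qed.

Definition nonunits := PIset n :\: Sset n.

(* Possibly empty, unlike [subsemigroup], so that complements of isolated sets are isolated. *)
Definition isolated (W : {set eltn}) :=
  [/\ W \subset PIset n, forall a b, a \in W -> b \in W -> prod a b \in W
    & completely_isolated W].

Lemma isolated_setD W : isolated W -> isolated (PIset n :\: W).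
Proof.
case=> _ Wmul Wci; split; first exact: subsetDl.
  move=> a b /setDP[ha aNW] /setDP[hb bNW]; rewrite in_setD prod_PI // andbT.
  by apply/negP=> /(Wci _ _ ha hb)[aW|bW]; [case/negP: aNW | case/negP: bNW].
move=> a b ha hb; rewrite !in_setD ha hb prod_PI // !andbT => abNW.
have [aW|] := boolP (a \in W); last by left.
by right; apply: contraNN abNW; apply: Wmul.
Qed.

Lemma isolated_zero W a : isolated W -> a \in W -> a \notin Sset n -> zero_elt \in W.
Proof.
case=> /subsetP WPI Wmul Wci.
elim: {a}_.+1 {-2}a (ltnSn (weight a)) => // m IH a; rewrite ltnS => le_am aW a_nS.
have ha := WPI a aW.
have descend b : weight b < weight a -> b \in W -> zero_elt \in W.
  by move=> lt_ba bW; apply: (IH b (leq_trans lt_ba le_am) bW (weight_lt_notin_Sset lt_ba)).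
have [a0|/set0Pn[B hB]] := eqVneq (glines a) set0.
  by rewrite -(of_glinesK ha) a0 in aW.
case: (lighter_sq_or_factors ha a_nS hB) => [lt_aa|[x [y [hx hy xy lt_xx lt_yy]]]].
  exact: descend lt_aa (Wmul _ _ aW aW).
have : prod x y \in W by rewrite xy.
case/(Wci _ _ hx hy) => [xW|yW].
  exact: descend lt_xx (Wmul _ _ xW xW).
exact: descend lt_yy (Wmul _ _ yW yW).
Qed.

Lemma mul_closed_perm_elt1 W s : (forall a b, a \in W -> b \in W -> prod a b \in W) ->
  perm_elt s \in W -> perm_elt 1%g \in W.
Proof.
move=> Wmul sW; have pow_in k : perm_elt (s ^+ k.+1)%g \in W.
  by elim: k => [|k IH]; rewrite ?expg1 // expgSr -prod_perm_elt Wmul.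
by have := pow_in #[s]%g.-1; rewrite prednK ?order_gt0 // expg_order.
Qed.

Lemma isolated_units W : isolated W -> Sset n :&: W = Sset n \/ Sset n :&: W = set0.
Proof.
move=> isoW; have [_ Wmul _] := isoW.
have [oneW|oneNW] := boolP (perm_elt 1%g \in W); [left|right].
  apply/setIidPl/subsetP=> _ /SsetP[s ->]; apply/negPn/negP=> sNW.
  have sQ : perm_elt s \in PIset n :\: W by rewrite in_setD sNW perm_elt_PI.
  have [_ Qmul _] := isolated_setD isoW.
  by have := mul_closed_perm_elt1 Qmul sQ; rewrite in_setD oneW.
apply/eqP; rewrite -subset0; apply/subsetP=> _ /setIP[/SsetP[s ->] sW].
by case/negP: oneNW; exact: mul_closed_perm_elt1 Wmul sW.
Qed.

Lemma isolated_nonunits W : isolated W -> nonunits :&: W = nonunits \/ nonunits :&: W = set0.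
Proof.
move=> isoW; have [zW|zNW] := boolP (zero_elt \in W); [left|right].
  apply/setIidPl/subsetP=> a /setDP[ha a_nS]; apply/negPn/negP=> aNW.
  have aQ : a \in PIset n :\: W by rewrite in_setD aNW ha.
  by have := isolated_zero (isolated_setD isoW) aQ a_nS; rewrite in_setD zW.
apply/eqP; rewrite -subset0; apply/subsetP=> a /setIP[/setDP[_ a_nS] aW].
by case/negP: zNW; exact: isolated_zero isoW aW a_nS.
Qed.

Lemma Sset_sub_PIset : Sset n \subset PIset n.
Proof. by apply/subsetP=> _ /SsetP[s ->]; exact: perm_elt_PI. Qed.

Lemma PIset_isolated : subsemigroup (PIset n) /\ completely_isolated (PIset n).
Proof.
split; last by move=> a b ha _ _; left.
by split=> //; [apply/set0Pn; exists zero_elt; exact: zero_PI | exact: prod_PI].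
Qed.

Lemma Sset_isolated : subsemigroup (Sset n) /\ completely_isolated (Sset n).
Proof.
split; last by move=> a b ha _ /(Sset_prod_left ha); left.
split; first exact: Sset_sub_PIset.
  by apply/set0Pn; exists (perm_elt 1%g); apply/SsetP; exists 1%g.
exact: Sset_prod.
Qed.

Lemma nonunits_isolated : 0 < n -> subsemigroup nonunits /\ completely_isolated nonunits.
Proof.
move=> n_gt0; split; first split.
- exact: subsetDl.
- by apply/set0Pn; exists zero_elt; rewrite in_setD zero_PI zero_notin_Sset.
- move=> a b /setDP[ha a_nS] /setDP[hb _]; rewrite in_setD prod_PI // andbT.
  by apply: contra a_nS; exact: Sset_prod_left.
move=> a b ha hb; rewrite !in_setD ha hb prod_PI // !andbT => ab_nS.
by apply/orP; rewrite -negb_and; move: ab_nS; apply: contra => /andP[]; exact: Sset_prod.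
Qed.

End PartitionMonoid.

Theorem mainTheorem10 (n : nat) (Hn : 2 <= n) (T : {set elt n}) :
  (subsemigroup T /\ completely_isolated T) <->
  (T = PIset n \/ T = Sset n \/ T = PIset n :\: Sset n).
Proof.
split; last first.
  case=> [->|[->|->]]; [exact: PIset_isolated | exact: Sset_isolated |].
  by apply: nonunits_isolated; apply: leq_trans Hn.
case=> -[TPI Tn0 Tmul] Tci; have isoT : isolated T by [].
have PI_split : Sset n :|: nonunits n = PIset n.
  by rewrite -{1}(setIidPr (Sset_sub_PIset n)) setID.
have T_split : T = (Sset n :&: T) :|: (nonunits n :&: T).
  by rewrite -setIUl PI_split (setIidPr TPI).
case: (isolated_units isoT) (isolated_nonunits isoT) => ST [] NT; rewrite T_split ST NT.
- by left.
- by right; left; rewrite setU0.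
- by right; right; rewrite set0U.
- by move: Tn0; rewrite T_split ST NT setU0 eqxx.
Qed.
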